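(* Let $\mathbb{F}\subseteq\mathbb{C}$ be a subfield closed under complex conjugation, $m\ge2$, $N\ge1$. Let $\mathrm{v}=(v_1,\dots,v_m)\in\mathbb{F}^m$ have unit norm and let $V\in\mathbb{F}^{m\times m}$ be a unitary matrix whose first row is $\mathrm{v}$. Let $\mathbf{A}_1(z)=(a_{11}(z),\dots,a_{1m}(z))$ be a row of polynomials $a_{1j}(z)=\sum_{k=0}^N\alpha_{kj}z^k$, $\alpha_{kj}\in\mathbb{F}$, with $\sum_{j=1}^m|\alpha_{Nj}|>0$, such that $\mathbf{A}_1(z)\widetilde{\mathbf{A}_1}(z)=1$ for $z\in\mathbb{C}\setminus\{0\}$ and $\mathbf{A}_1(1)=\mathrm{v}$. Then there exists a unique $\mathbf{A}(z)\in\mathcal{WM}(m,N,N,\mathbb{F})$ with $\mathbf{A}(1)=V$ whose first row is $\mathbf{A}_1(z)$.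
   Context: For a Laurent polynomial $p(z)=\sum_kc_kz^k$, $\widetilde{p}(z)=\sum_k\overline{c_k}z^{-k}$; for a matrix of Laurent polynomials $P(z)=(p_{ij})$, $\widetilde{P}(z)=(\widetilde{p_{ij}})^T$. $\mathcal{WM}(m,N,N,\mathbb{F})$ is the set of matrix polynomials $\mathbf{A}(z)=\sum_{k=0}^NA_kz^k$ with $A_k\in\mathbb{F}^{m\times m}$, $A_N\ne0$, satisfying $\mathbf{A}(z)\widetilde{\mathbf{A}}(z)=I_m$ for $z\ne0$ (where $\widetilde{\mathbf{A}}(z)=\sum_kA_k^*z^{-k}$) and $\det\mathbf{A}(z)=c\,z^N$ for some constant $c$. *)

From mathcomp Require Import all_boot all_algebra.
From mathcomp Require Import complex reals.
Set Implicit Arguments. Unset Strict Implicit. Unset Printing Implicit Defensive.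
Import GRing.Theory Num.Theory.
Local Open Scope ring_scope.

Section Defs.
Variable C : numClosedFieldType.

Definition tilde_eval (p : {poly C}) (z : C) : C :=
  (map_poly (fun c : C => c^*) p).[z^-1].

Definition evalmx m n (A : 'M[{poly C}]_(m, n)) (z : C) : 'M[C]_(m, n) :=
  \matrix_(i, j) (A i j).[z].

Definition tildemx m n (A : 'M[{poly C}]_(m, n)) (z : C) : 'M[C]_(n, m) :=
  \matrix_(i, j) tilde_eval (A j i) z.

Definition WM (m N : nat) (F : {pred C}) (A : 'M[{poly C}]_m) : Prop :=
  [/\ (forall i j k, (A i j)`_k \in F),
      (forall i j, (size (A i j) <= N.+1)%N),
      (exists i j, (A i j)`_N != 0),
      (forall z : C, z != 0 -> evalmx A z *m tildemx A z = 1%:M)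
    & (exists c : C, \det A = c *: 'X^N)].

Definition ord_first (m : nat) (hm : (0 < m)%N) : 'I_m := Ordinal hm.
End Defs.

From HB Require Import structures.
From mathcomp Require Import all_boot all_algebra.
From mathcomp Require Import complex reals.
Set Implicit Arguments. Unset Strict Implicit. Unset Printing Implicit Defensive.
Import GRing.Theory Num.Theory.
Local Open Scope ring_scope.
Local Open Scope sesquilinear_scope.

(* Induction on the degree N. Let w be the leading coefficient of the row a and P_w the
   orthogonal projector onto the line of w. Comparing constant terms in
   a(z) (z^N a~(z)) = z^N gives a_0 P_w = 0, so the row a(z) E_w(z)^-1, where
   E_w(z) = (I - P_w) + z P_w is a Blaschke-Potapov factor, is again paraunitary, of degree
   N - 1 and with the same value at 1; a completion of it multiplied by E_w completes a.
   Conversely, let A complete a, with det A = c z^N. Then c <> 0 because A(1) = V is unitary,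
   and the same comparison for A gives adj A_0 = c A_N^*, which is nonzero, so A_0 has corank
   at most one. Every row of A_N is killed by A_0^*, hence is a multiple of w, and A_0 P_w = 0;
   therefore A E_w^-1 is a polynomial completion of the reduced row, unique by induction. *)

Lemma det1D_mul (R : comNzRingType) n (c : 'cV[R]_n) (r : 'rV[R]_n) :
  \det (1%:M + c *m r) = 1 + (r *m c) 0 0.
Proof.
have lower : block_mx (1%:M : 'M[R]_1) r (- c) 1%:M =
    block_mx 1%:M 0 (- c) 1%:M *m block_mx 1%:M r 0 (1%:M + c *m r).
  rewrite mulmx_block ?mul1mx ?mul0mx ?mulmx0 ?mulmx1 ?addr0 ?add0r mulNmx.
  by rewrite addrCA addNr addr0.
have upper : block_mx (1%:M : 'M[R]_1) r (- c) 1%:M =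
    block_mx (1%:M + r *m c) r 0 1%:M *m block_mx 1%:M 0 (- c) 1%:M.
  rewrite mulmx_block ?mul1mx ?mul0mx ?mulmx0 ?mulmx1 ?addr0 ?add0r mulmxN.
  by rewrite addrK.
have := congr1 determinant (etrans (esym upper) lower).
rewrite !det_mulmx !det_lblock !det_ublock !det1 !mul1r !mulr1 det_mx11 !mxE.
by move=> ->.
Qed.

Lemma rank_adj_neq0 (K : fieldType) n (M : 'M[K]_n.+1) :
  \adj M != 0 -> (n <= \rank M)%N.
Proof.
apply: contraR; rewrite -ltnNge => rkM; apply/eqP/matrixP=> i j.
rewrite !mxE /cofactor; apply/eqP; rewrite mulf_eq0; apply/orP; right.
apply/eqP; apply: contraTeq rkM => minor_neq0; rewrite -ltnNge ltnS.
have rk_minor : \rank (row' j (col' i M)) = n.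
  by apply/eqP; rewrite -/(row_free _) row_free_unit unitmxE unitfE.
rewrite -[X in (X <= _)%N]rk_minor.
apply: (leq_trans (mxrankS (rowsub_sub (lift j) (col' i M)))).
rewrite -mxrank_tr tr_col' -[X in (_ <= X)%N]mxrank_tr.
exact: mxrankS (rowsub_sub (lift i) M^T).
Qed.

Lemma ker_corank1_colinear (K : fieldType) n p (M : 'M[K]_(n, p)) (u w : 'rV[K]_n) :
  w != 0 -> (n <= (\rank M).+1)%N -> u *m M = 0 -> w *m M = 0 ->
  exists a, u = a *: w.
Proof.
move=> w_neq0 rkM /sub_kermxP uK /sub_kermxP wK; apply/sub_rVP.
suff Kw : (kermx M <= w)%MS by apply: submx_trans uK Kw.
rewrite -(mxrank_leqif_sup wK).2 eqn_leq mxrankS //= mxrank_ker rank_rV w_neq0.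
by rewrite leq_subLR addn1.
Qed.

Lemma poly_eq0_nonzero (R : numDomainType) (p : {poly R}) :
  (forall z, z != 0 -> p.[z] = 0) -> p = 0.
Proof.
move=> p0; apply: (@roots_geq_poly_eq0 _ p [seq i.+1%:R | i <- iota 0 (size p)]).
- by apply/allP=> _ /mapP[i _ ->]; apply/rootP/p0; rewrite pnatr_eq0.
- by rewrite map_inj_uniq ?iota_uniq // => i j /eqP; rewrite eqr_nat eqSS => /eqP.
- by rewrite size_map size_iota.
Qed.

Section ParaunitaryCompletion.
Variable C : numClosedFieldType.

Lemma trmxC_mul m n p (A : 'M[C]_(m, n)) (B : 'M[C]_(n, p)) :
  (A *m B)^t* = B^t* *m A^t*.
Proof. by rewrite trmx_mul map_mxM. Qed.

Lemma trmxC1 n : (1%:M : 'M[C]_n)^t* = 1%:M.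
Proof. by rewrite trmx1 map_mx1. Qed.

Lemma trmxCD m n (A B : 'M[C]_(m, n)) : (A + B)^t* = A^t* + B^t*.
Proof. by rewrite linearD /= map_mxD. Qed.

Lemma trmxCB m n (A B : 'M[C]_(m, n)) : (A - B)^t* = A^t* - B^t*.
Proof. by rewrite linearB /= map_mxB. Qed.

Lemma trmxCZ m n a (A : 'M[C]_(m, n)) : (a *: A)^t* = a^* *: A^t*.
Proof. by rewrite linearZ /= map_mxZ. Qed.

Lemma evalmxE m n (A : 'M[{poly C}]_(m, n)) z : evalmx A z = map_mx (horner_eval z) A.
Proof. by apply/matrixP=> i j; rewrite !mxE. Qed.

Lemma evalmxM m n p (A : 'M[{poly C}]_(m, n)) (B : 'M_(n, p)) z :
  evalmx (A *m B) z = evalmx A z *m evalmx B z.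
Proof. by rewrite !evalmxE map_mxM. Qed.

Lemma evalmxZ m n q (A : 'M[{poly C}]_(m, n)) z :
  evalmx (q *: A) z = q.[z] *: evalmx A z.
Proof. by apply/matrixP=> i j; rewrite !mxE hornerM. Qed.

Lemma evalmx_polyC m n (M : 'M[C]_(m, n)) z : evalmx (map_mx polyC M) z = M.
Proof. by apply/matrixP=> i j; rewrite !mxE hornerC. Qed.

Definition coefmx m n (A : 'M[{poly C}]_(m, n)) k : 'M[C]_(m, n) :=
  \matrix_(i, j) (A i j)`_k.

Lemma evalmx0 m n (A : 'M[{poly C}]_(m, n)) : evalmx A 0 = coefmx A 0.
Proof. by apply/matrixP=> i j; rewrite !mxE horner_coef0. Qed.

Lemma coefmxD m n (A B : 'M[{poly C}]_(m, n)) k :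
  coefmx (A + B) k = coefmx A k + coefmx B k.
Proof. by apply/matrixP=> i j; rewrite !mxE coefD. Qed.

Lemma coefmx_mul_polyC m n p (A : 'M[{poly C}]_(m, n)) (M : 'M[C]_(n, p)) k :
  coefmx (A *m map_mx polyC M) k = coefmx A k *m M.
Proof.
apply/matrixP=> i j; rewrite !mxE coef_sum; apply: eq_bigr => l _.
by rewrite !mxE coefMC.
Qed.

Lemma coefmxXZ m n (A : 'M[{poly C}]_(m, n)) k :
  coefmx ('X *: A) k = if k is k'.+1 then coefmx A k' else 0.
Proof. by apply/matrixP=> i j; rewrite !mxE coefXM; case: k => [|k]; rewrite ?mxE. Qed.

Lemma coefmx_drop1 m n (A : 'M[{poly C}]_(m, n)) k :
  coefmx (map_mx (drop_poly 1) A) k = coefmx A k.+1.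
Proof. by apply/matrixP=> i j; rewrite !mxE coef_drop_poly addn1. Qed.

Lemma coefmx_row m n (A : 'M[{poly C}]_(m, n)) i k :
  coefmx (row i A) k = row i (coefmx A k).
Proof. by apply/matrixP=> l j; rewrite !mxE. Qed.

Lemma coefmx_polyC m n (M : 'M[C]_(m, n)) k :
  coefmx (map_mx polyC M) k = if k == 0%N then M else 0.
Proof. by apply/matrixP=> i j; rewrite !mxE coefC; case: (k == 0%N); rewrite ?mxE. Qed.

Lemma coefmx_inj m n (A B : 'M[{poly C}]_(m, n)) :
  (forall k, coefmx A k = coefmx B k) -> A = B.
Proof.
move=> eqAB; apply/matrixP=> i j; apply/polyP=> k.
by have /matrixP/(_ i j) := eqAB k; rewrite !mxE.
Qed.

Lemma coefmx_neq0P m n (A : 'M[{poly C}]_(m, n)) k :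
  coefmx A k != 0 <-> exists i j, (A i j)`_k != 0.
Proof.
split=> [|[i [j Aijk]]]; last first.
  by apply: contra Aijk => /eqP/matrixP/(_ i j); rewrite !mxE => ->.
move=> Ak_neq0.
have [[i j] /= Aijk | noA] := pickP (fun ij : 'I_m * 'I_n => (A ij.1 ij.2)`_k != 0).
  by exists i, j.
case/eqP: Ak_neq0; apply/matrixP=> i j; rewrite !mxE.
by have /negbFE/eqP := noA (i, j).
Qed.

Definition mxsize_leq m n (A : 'M[{poly C}]_(m, n)) d :=
  forall i j, (size (A i j) <= d)%N.

Lemma mxsize_leqP m n (A : 'M[{poly C}]_(m, n)) d :
  mxsize_leq A d <-> (forall k, (d <= k)%N -> coefmx A k = 0).
Proof.
split=> [szA k dk | coefA i j].
  by apply/matrixP=> i j; rewrite !mxE; apply: (leq_sizeP _ _ (szA i j)).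
apply/leq_sizeP=> k dk; have /matrixP/(_ i j) := coefA k dk.
by rewrite !mxE.
Qed.

Lemma mxsize_leq1E m n (A : 'M[{poly C}]_(m, n)) z :
  mxsize_leq A 1 -> A = map_mx polyC (evalmx A z).
Proof.
move=> szA; apply/matrixP=> i j; rewrite !mxE {2}(size1_polyC (szA i j)) hornerC.
exact: size1_polyC.
Qed.

Lemma tilde_evalE (p : {poly C}) z : tilde_eval p z = (p.[(z^-1)^*])^*.
Proof. by rewrite /tilde_eval -horner_map /= conjCK. Qed.

Lemma tildemxE m n (A : 'M[{poly C}]_(m, n)) z :
  tildemx A z = (evalmx A (z^-1)^*)^t*.
Proof. by apply/matrixP=> i j; rewrite !mxE tilde_evalE. Qed.

Lemma tildemxM m n p (A : 'M[{poly C}]_(m, n)) (B : 'M_(n, p)) z :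
  tildemx (A *m B) z = tildemx B z *m tildemx A z.
Proof. by rewrite !tildemxE evalmxM trmxC_mul. Qed.

Section LineProjector.
Variables (n : nat) (w : 'rV[C]_n).

Definition line_proj : 'M[C]_n := (dotmx w w)^-1 *: (w^t* *m w).
Local Notation P := line_proj.

Lemma mulmx_trmxC_row : w *m w^t* = (dotmx w w)%:M.
Proof. by apply/matrixP=> i j; rewrite (ord1 i) (ord1 j) [RHS]mxE mulr1n dotmxE. Qed.

Lemma row_mul_line_proj : w *m P = w.
Proof.
have [->|w_neq0] := eqVneq w 0; first by rewrite mul0mx.
rewrite -scalemxAr mulmxA mulmx_trmxC_row mul_scalar_mx scalerA mulVf ?scale1r //.
by rewrite dnorm_eq0.
Qed.

Lemma line_proj_idem : P *m P = P.
Proof. by rewrite {1}/line_proj -scalemxAl -mulmxA row_mul_line_proj. Qed.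

Lemma trmxC_line_proj : P^t* = P.
Proof.
rewrite trmxCZ trmxC_mul trmxCK fmorphV; congr (_^-1 *: _).
by apply: conj_Creal; rewrite ger0_real // dnorm_ge0.
Qed.

Lemma mulmx_line_proj_eq0 p (u : 'M[C]_(p, n)) : u *m w^t* = 0 -> u *m P = 0.
Proof. by move=> uw; rewrite -scalemxAr mulmxA uw mul0mx scaler0. Qed.

Lemma line_projC_trmxC : (1%:M - P) *m w^t* = 0.
Proof.
rewrite mulmxBl mul1mx -[in X in _ - X]trmxC_line_proj -trmxC_mul.
by rewrite row_mul_line_proj subrr.
Qed.

Lemma mulmx_line_projC_proj : (1%:M - P) *m P = 0.
Proof. by rewrite mulmxBl mul1mx line_proj_idem subrr. Qed.

Lemma mulmx_line_proj_projC : P *m (1%:M - P) = 0.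
Proof. by rewrite mulmxBr mulmx1 line_proj_idem subrr. Qed.

Lemma line_projC_idem : (1%:M - P) *m (1%:M - P) = 1%:M - P.
Proof. by rewrite mulmxBr mulmx1 mulmx_line_projC_proj subr0. Qed.

Definition bpmx (x : C) : 'M[C]_n := (1%:M - P) + x *: P.

Lemma bpmxM x y : bpmx x *m bpmx y = bpmx (x * y).
Proof.
rewrite /bpmx mulmxDl (mulmxDr (1%:M - P)) (mulmxDr (x *: P)).
rewrite -!(scalemxAr y) -!(scalemxAl x).
rewrite line_projC_idem mulmx_line_projC_proj mulmx_line_proj_projC line_proj_idem.
by rewrite !scaler0 !addr0 add0r scalerA mulrC.
Qed.

Lemma bpmx1 : bpmx 1 = 1%:M.
Proof. by rewrite /bpmx scale1r subrK. Qed.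

Lemma trmxC_bpmx x : (bpmx x)^t* = bpmx x^*.
Proof.
by rewrite /bpmx trmxCD trmxCB trmxC1 (trmxCZ x) trmxC_line_proj.
Qed.

Definition bpfactor : 'M[{poly C}]_n := map_mx polyC (1%:M - P) + 'X *: map_mx polyC P.

Lemma evalmx_bpfactor z : evalmx bpfactor z = bpmx z.
Proof. by rewrite evalmxE map_mxD -!evalmxE evalmxZ !evalmx_polyC hornerX. Qed.

Lemma det_bpfactor : w != 0 -> \det bpfactor = 'X.
Proof.
move=> w_neq0; have -> : bpfactor =
    1%:M + (('X - 1) *: map_mx polyC ((dotmx w w)^-1 *: w^t*)) *m map_mx polyC w.
  rewrite /bpfactor map_mxB map_mx1 -scalemxAl -map_mxM -scalemxAl -/line_proj.
  by rewrite scalerBl scale1r addrAC addrA.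
rewrite (det1D_mul (R := {poly C})) -scalemxAr -map_mxM -scalemxAr.
rewrite mulmx_trmxC_row !mxE /= mulr1n mulVf ?dnorm_eq0 // polyC1 mulr1.
by rewrite addrC subrK.
Qed.

End LineProjector.

Definition paraunitary m n (A : 'M[{poly C}]_(m, n)) :=
  forall z : C, z != 0 -> evalmx A z *m tildemx A z = 1%:M.

(* For [size p <= N.+1], [reciprocal N p] is the polynomial z^N p~(z). *)
Definition reciprocal N (p : {poly C}) : {poly C} := \poly_(k < N.+1) (p`_(N - k))^*.

Definition reciprocalmx N m n (A : 'M[{poly C}]_(m, n)) : 'M[{poly C}]_(n, m) :=
  \matrix_(i, j) reciprocal N (A j i).

Lemma horner_reciprocal N (p : {poly C}) z : (size p <= N.+1)%N -> z != 0 ->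
  (reciprocal N p).[z] = z ^+ N * (p.[(z^-1)^*])^*.
Proof.
move=> szp z_neq0; rewrite horner_poly (horner_coef_wide _ szp) rmorph_sum mulr_sumr.
rewrite (reindex_inj rev_ord_inj) /=; apply: eq_bigr => i _.
have iN : (i <= N)%N by rewrite -ltnS.
rewrite rmorphM rmorphXn /= conjCK subSS subKn // mulrCA; congr (_ * _).
by rewrite -[X in z ^+ X * _](subnK iN) exprD exprVn mulrK // unitfE expf_neq0.
Qed.

Lemma evalmx_reciprocalmx N m n (A : 'M[{poly C}]_(m, n)) z :
  mxsize_leq A N.+1 -> z != 0 -> evalmx (reciprocalmx N A) z = z ^+ N *: tildemx A z.
Proof. by move=> szA z_neq0; apply/matrixP=> i j; rewrite !mxE horner_reciprocal // tilde_evalE. Qed.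

Lemma evalmx0_reciprocalmx N m n (A : 'M[{poly C}]_(m, n)) :
  evalmx (reciprocalmx N A) 0 = (coefmx A N)^t*.
Proof. by apply/matrixP=> i j; rewrite !mxE horner_coef0 coef_poly /= subn0. Qed.

Lemma evalmx_inj_nonzero m n (A B : 'M[{poly C}]_(m, n)) :
  (forall z, z != 0 -> evalmx A z = evalmx B z) -> A = B.
Proof.
move=> eqAB; apply/matrixP=> i j; apply/eqP; rewrite -subr_eq0; apply/eqP.
apply: poly_eq0_nonzero => z z_neq0; have /matrixP/(_ i j) := eqAB z z_neq0.
by rewrite !mxE hornerD hornerN => ->; rewrite subrr.
Qed.

Lemma paraunitary_mul_reciprocal N m n (A : 'M[{poly C}]_(m, n)) :
  paraunitary A -> mxsize_leq A N.+1 -> A *m reciprocalmx N A = 'X^N *: 1%:M.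
Proof.
move=> puA szA; apply: evalmx_inj_nonzero => z z_neq0.
rewrite evalmxM evalmx_reciprocalmx // -scalemxAr puA // evalmxZ hornerXn.
by rewrite evalmxE map_mx1.
Qed.

Lemma paraunitary_coef0_lead N m n (A : 'M[{poly C}]_(m, n)) :
  paraunitary A -> mxsize_leq A N.+2 -> coefmx A 0 *m (coefmx A N.+1)^t* = 0.
Proof.
move=> puA szA; have := congr1 (fun M => evalmx M 0) (paraunitary_mul_reciprocal puA szA).
by rewrite evalmxM evalmxZ evalmx0 evalmx0_reciprocalmx hornerXn expr0n scale0r.
Qed.

Lemma adj_coefmx0 N n (A : 'M[{poly C}]_n) c :
  paraunitary A -> mxsize_leq A N.+1 -> \det A = c *: 'X^N ->
  \adj (coefmx A 0) = c *: (coefmx A N)^t*.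
Proof.
move=> puA szA detA.
have adjA : \adj A = c%:P *: reciprocalmx N A.
  have XN_neq0 : 'X^N != 0 :> {poly C} by rewrite expf_neq0 // polyX_eq0.
  apply/matrixP=> i j; apply: (mulfI XN_neq0).
  have := congr1 (fun M => (\adj A *m M) i j) (paraunitary_mul_reciprocal puA szA).
  rewrite mulmxA mul_adj_mx detA -scalemxAr mulmx1 mul_scalar_mx !mxE.
  by rewrite -mul_polyC => <-; rewrite mulrCA mulrA.
have := congr1 (fun M => evalmx M 0) adjA.
by rewrite evalmxZ hornerC evalmx0_reciprocalmx evalmxE map_mx_adj -evalmxE evalmx0.
Qed.

Lemma coef0_mul_line_proj N m n (A : 'M[{poly C}]_(m, n)) i :
  paraunitary A -> mxsize_leq A N.+2 ->
  coefmx A 0 *m line_proj (row i (coefmx A N.+1)) = 0.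
Proof.
move=> puA szA; apply: mulmx_line_proj_eq0.
by rewrite tr_row map_col colE mulmxA paraunitary_coef0_lead // mul0mx.
Qed.

Lemma lead_mul_line_projC N m (A : 'M[{poly C}]_m.+1) c i :
  paraunitary A -> mxsize_leq A N.+2 -> \det A = c *: 'X^(N.+1) -> c != 0 ->
  row i (coefmx A N.+1) != 0 ->
  coefmx A N.+1 *m (1%:M - line_proj (row i (coefmx A N.+1))) = 0.
Proof.
move=> puA szA detA c_neq0; set L := coefmx A N.+1; set w := row i L => w_neq0.
have L_A0 : L *m (coefmx A 0)^t* = 0.
  by rewrite -[L]trmxCK -trmxC_mul paraunitary_coef0_lead // linear0 map_mx0.
have rkA0 : (m <= \rank ((coefmx A 0)^t*))%N.
  rewrite mxrank_map mxrank_tr rank_adj_neq0 // (adj_coefmx0 puA szA detA).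
  rewrite scaler_eq0 negb_or c_neq0 /=; apply: contraNneq w_neq0 => L0.
  by rewrite /w -[L]trmxCK L0 linear0 map_mx0 row0.
have rowL_A0 k : row k L *m (coefmx A 0)^t* = 0 by rewrite -row_mul L_A0 row0.
apply/row_matrixP=> j; rewrite row_mul row0.
have [a ->] := ker_corank1_colinear w_neq0 rkA0 (rowL_A0 j) (rowL_A0 i).
by rewrite -scalemxAl mulmxBr mulmx1 row_mul_line_proj subrr scaler0.
Qed.

Section BlaschkePotapovReduction.
Variables (n : nat) (w : 'rV[C]_n).
Local Notation P := (line_proj w).
Local Notation E := (bpfactor w).

(* A E_w(z)^-1, a polynomial matrix when A_0 P = 0 (see [bp_divrK]). *)
Definition bp_divr p (A : 'M[{poly C}]_(p, n)) : 'M[{poly C}]_(p, n) :=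
  A *m map_mx polyC (1%:M - P) + map_mx (drop_poly 1) A *m map_mx polyC P.

Lemma coefmx_bp_divr p (A : 'M[{poly C}]_(p, n)) k :
  coefmx (bp_divr A) k = coefmx A k *m (1%:M - P) + coefmx A k.+1 *m P.
Proof. by rewrite coefmxD !coefmx_mul_polyC coefmx_drop1. Qed.

Lemma coefmx_mul_bpfactor p (B : 'M[{poly C}]_(p, n)) k :
  coefmx (B *m E) k =
  coefmx B k *m (1%:M - P) + (if k is k'.+1 then coefmx B k' *m P else 0).
Proof.
rewrite /bpfactor (mulmxDr B) -scalemxAr coefmxD coefmx_mul_polyC coefmxXZ.
by case: k => [|k] //; rewrite coefmx_mul_polyC.
Qed.

Lemma row_bp_divr p (A : 'M[{poly C}]_(p, n)) i : row i (bp_divr A) = bp_divr (row i A).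
Proof. by rewrite /bp_divr linearD /= !row_mul map_row. Qed.

Lemma bp_divrK p (A : 'M[{poly C}]_(p, n)) :
  coefmx A 0 *m P = 0 -> bp_divr A *m E = A.
Proof.
move=> A0P; apply: coefmx_inj => k; rewrite coefmx_mul_bpfactor !coefmx_bp_divr.
rewrite mulmxDl -!mulmxA line_projC_idem mulmx_line_proj_projC mulmx0 addr0.
case: k => [|k]; first by rewrite mulmxBr mulmx1 A0P subr0 addr0.
rewrite coefmx_bp_divr mulmxDl -!mulmxA mulmx_line_projC_proj line_proj_idem.
by rewrite mulmx0 add0r -mulmxDr subrK mulmx1.
Qed.

Lemma tildemx_bpfactor z : tildemx E z = bpmx w z^-1.
Proof. by rewrite tildemxE evalmx_bpfactor trmxC_bpmx conjCK. Qed.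

Lemma paraunitary_mul_bpfactor p (B : 'M[{poly C}]_(p, n)) :
  paraunitary B -> paraunitary (B *m E).
Proof.
move=> puB z z_neq0; rewrite evalmxM tildemxM evalmx_bpfactor tildemx_bpfactor.
by rewrite mulmxA -(mulmxA _ (bpmx w z)) bpmxM mulfV // bpmx1 mulmx1 puB.
Qed.

Lemma paraunitary_bp_divr p (A : 'M[{poly C}]_(p, n)) :
  coefmx A 0 *m P = 0 -> paraunitary A -> paraunitary (bp_divr A).
Proof.
move=> A0P puA z z_neq0; have := puA z z_neq0.
rewrite -{1 2}(bp_divrK A0P) evalmxM tildemxM evalmx_bpfactor tildemx_bpfactor.
by rewrite mulmxA -(mulmxA _ (bpmx w z)) bpmxM mulfV // bpmx1 mulmx1.
Qed.

Lemma evalmx1_mul_bpfactor p (B : 'M[{poly C}]_(p, n)) : evalmx (B *m E) 1 = evalmx B 1.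
Proof. by rewrite evalmxM evalmx_bpfactor bpmx1 mulmx1. Qed.

Lemma evalmx1_bp_divr p (A : 'M[{poly C}]_(p, n)) :
  coefmx A 0 *m P = 0 -> evalmx (bp_divr A) 1 = evalmx A 1.
Proof. by move=> A0P; rewrite -{2}(bp_divrK A0P) evalmx1_mul_bpfactor. Qed.

Lemma mxsize_mul_bpfactor N p (B : 'M[{poly C}]_(p, n)) :
  mxsize_leq B N.+1 -> mxsize_leq (B *m E) N.+2.
Proof.
move=> /mxsize_leqP szB; apply/mxsize_leqP => k Nk; rewrite coefmx_mul_bpfactor.
by case: k Nk => [|k] // Nk; rewrite !szB ?mul0mx ?addr0 // ltnW.
Qed.

Lemma mxsize_bp_divr N p (A : 'M[{poly C}]_(p, n)) :
  mxsize_leq A N.+2 -> coefmx A N.+1 *m (1%:M - P) = 0 ->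
  mxsize_leq (bp_divr A) N.+1.
Proof.
move=> /mxsize_leqP szA lead_P; apply/mxsize_leqP => k Nk; rewrite coefmx_bp_divr.
rewrite (szA k.+1) ?mul0mx ?addr0 //.
by case: (ltngtP k N.+1) Nk => [|kN|->] // _; rewrite szA ?mul0mx.
Qed.

End BlaschkePotapovReduction.

Section CoefficientField.
Variables (F : {pred C}) (F_subfield : divring_closed F).
Hypothesis F_conj : {in F, forall x, x^* \in F}.
HB.instance Definition _ := GRing.isDivringClosed.Build C F F_subfield.

Lemma mxOver_trmxC m n (A : 'M[C]_(m, n)) : A \is a mxOver F -> A^t* \is a mxOver F.
Proof. by move=> /mxOverP AF; apply/mxOverP=> i j; rewrite !mxE F_conj. Qed.

Lemma mxOver_line_proj n (w : 'rV[C]_n) : w \is a mxOver F -> line_proj w \is a mxOver F.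
Proof.
move=> wF; have wwF : w *m w^t* \is a mxOver F by rewrite mxOverM ?mxOver_trmxC.
by rewrite mxOverZ ?mxOverM ?mxOver_trmxC // rpredV dotmxE (mxOverP wwF).
Qed.

Definition mxpolyOver m n (A : 'M[{poly C}]_(m, n)) := forall k, coefmx A k \is a mxOver F.

Lemma mxpolyOverP m n (A : 'M[{poly C}]_(m, n)) :
  mxpolyOver A <-> forall i j k, (A i j)`_k \in F.
Proof.
split=> [AF i j k | AF k]; last by apply/mxOverP=> i j; rewrite mxE.
by have /mxOverP/(_ i j) := AF k; rewrite mxE.
Qed.

Lemma mxpolyOver_mul_bpfactor p n (w : 'rV[C]_n) (B : 'M[{poly C}]_(p, n)) :
  w \is a mxOver F -> mxpolyOver B -> mxpolyOver (B *m bpfactor w).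
Proof.
move=> wF BF k; have PF := mxOver_line_proj wF.
rewrite coefmx_mul_bpfactor rpredD ?mxOverM ?rpredB ?rpred1 //.
by case: k => [|k]; rewrite ?rpred0 ?mxOverM.
Qed.

Lemma mxpolyOver_bp_divr p n (w : 'rV[C]_n) (A : 'M[{poly C}]_(p, n)) :
  w \is a mxOver F -> mxpolyOver A -> mxpolyOver (bp_divr w A).
Proof.
move=> wF AF k; have PF := mxOver_line_proj wF.
by rewrite coefmx_bp_divr rpredD ?mxOverM ?rpredB ?rpred1.
Qed.

Lemma WMP N n (A : 'M[{poly C}]_n) :
  WM N F A <-> [/\ mxpolyOver A, mxsize_leq A N.+1, coefmx A N != 0,
                   paraunitary A & exists c, \det A = c *: 'X^N].
Proof.
by split=> -[AF szA AN puA detA]; split=> //; apply/mxpolyOverP || apply/coefmx_neq0P.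
Qed.

Section Completion.
Variables (m : nat) (V : 'M[C]_m.+1) (i0 : 'I_m.+1).
Hypotheses (V_over : V \is a mxOver F) (V_unitary : V \is unitarymx).

Definition completion N (a : 'rV[{poly C}]_m.+1) (A : 'M[{poly C}]_m.+1) :=
  [/\ WM N F A, evalmx A 1 = V & row i0 A = a].

Definition admissible_row N (a : 'rV[{poly C}]_m.+1) :=
  [/\ mxpolyOver a, mxsize_leq a N.+1, coefmx a N != 0, paraunitary a
    & evalmx a 1 = row i0 V].

Lemma detV_neq0 : \det V != 0.
Proof. by rewrite -unitfE -unitmxE unitarymx_unit. Qed.

Lemma completion0 a : admissible_row 0 a -> exists! A, completion 0 a A.
Proof.
case=> _ sz_a _ _ a1; exists (map_mx polyC V); split.
  split; last by rewrite -map_row -a1 -mxsize_leq1E.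
  - apply/WMP; split.
    + by move=> k; rewrite coefmx_polyC; case: eqP => _; rewrite ?rpred0.
    + by move=> i j; rewrite mxE size_polyC leq_b1.
    + by rewrite coefmx_polyC eqxx; apply: contraNneq detV_neq0 => ->; rewrite det0.
    + by move=> z _; rewrite tildemxE !evalmx_polyC; apply/unitarymxP.
    + by exists (\det V); rewrite det_map_mx expr0 alg_polyC.
  - by rewrite evalmx_polyC.
by move=> A [/WMP[_ szA _ _ _] <- _]; rewrite -mxsize_leq1E.
Qed.

Lemma admissible_bp_divr N a :
  admissible_row N.+1 a -> admissible_row N (bp_divr (coefmx a N.+1) a).
Proof.
case=> aF sz_a w_neq0 pu_a a1; set w := coefmx a N.+1.
have a0P := mulmx_line_proj_eq0 (paraunitary_coef0_lead pu_a sz_a).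
split.
- exact: mxpolyOver_bp_divr (aF _) aF.
- apply: mxsize_bp_divr => //.
  by rewrite mulmxBr mulmx1 row_mul_line_proj subrr.
- rewrite coefmx_bp_divr row_mul_line_proj.
  apply/eqP => /(congr1 (fun M => M *m w^t*)).
  rewrite mulmxDl -mulmxA line_projC_trmxC mulmx0 add0r mul0mx mulmx_trmxC_row.
  by move/matrixP/(_ 0 0)/eqP; rewrite !mxE /= mulr1n dnorm_eq0 (negPf w_neq0).
- exact: paraunitary_bp_divr.
- by rewrite evalmx1_bp_divr.
Qed.

Lemma completion_mul_bpfactor N a B : admissible_row N.+1 a ->
  completion N (bp_divr (coefmx a N.+1) a) B ->
  completion N.+1 a (B *m bpfactor (coefmx a N.+1)).
Proof.
case=> aF sz_a w_neq0 pu_a _ [/WMP[BF sz_B _ pu_B [c detB]] B1 rowB].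
set w := coefmx a N.+1.
have a0P := mulmx_line_proj_eq0 (paraunitary_coef0_lead pu_a sz_a).
have rowBE : row i0 (B *m bpfactor w) = a by rewrite row_mul rowB bp_divrK.
split=> //; last by rewrite evalmx1_mul_bpfactor.
apply/WMP; split.
- exact: mxpolyOver_mul_bpfactor (aF _) BF.
- exact: mxsize_mul_bpfactor.
- by apply: contraNneq w_neq0 => BE0; rewrite /w -rowBE coefmx_row BE0 row0.
- exact: paraunitary_mul_bpfactor.
- by exists c; rewrite det_mulmx detB det_bpfactor // -scalerAl -exprSr.
Qed.

Lemma completion_bp_divr N a A : admissible_row N.+1 a -> completion N.+1 a A ->
  completion N (bp_divr (coefmx a N.+1) a) (bp_divr (coefmx a N.+1) A) /\
  bp_divr (coefmx a N.+1) A *m bpfactor (coefmx a N.+1) = A.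
Proof.
move=> a_adm [/WMP[AF sz_A _ pu_A [c detA]] A1 rowA].
have [aF _ w_neq0 _ _] := a_adm; set w := coefmx a N.+1.
have rowAN : row i0 (coefmx A N.+1) = w by rewrite -coefmx_row rowA.
have c_neq0 : c != 0.
  apply: contraNneq detV_neq0 => c0.
  by rewrite -A1 evalmxE det_map_mx detA c0 scale0r rmorph0.
have A0P : coefmx A 0 *m line_proj w = 0 by rewrite -rowAN coef0_mul_line_proj.
have AN_P : coefmx A N.+1 *m (1%:M - line_proj w) = 0.
  by rewrite -rowAN (lead_mul_line_projC pu_A sz_A detA c_neq0) // rowAN.
have AK := bp_divrK A0P.
split=> //; split.
- apply/WMP; split.
  + exact: mxpolyOver_bp_divr (aF _) AF.
  + exact: mxsize_bp_divr.
  + have [_ _ bN_neq0 _ _] := admissible_bp_divr a_adm.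
    apply: contraNneq bN_neq0 => AN0.
    by rewrite -[X in bp_divr _ X]rowA -row_bp_divr coefmx_row AN0 row0.
  + exact: paraunitary_bp_divr.
  + exists c; apply: (@mulIf _ 'X); first by rewrite polyX_eq0.
    by rewrite -scalerAl -exprSr -detA -[in RHS]AK det_mulmx det_bpfactor.
- by rewrite evalmx1_bp_divr.
- by rewrite row_bp_divr rowA.
Qed.

Lemma completion_unique N a : admissible_row N a -> exists! A, completion N a A.
Proof.
elim: N a => [|N IHN] a a_adm; first exact: completion0.
have [B [B_comp B_uniq]] := IHN _ (admissible_bp_divr a_adm).
exists (B *m bpfactor (coefmx a N.+1)); split; first exact: completion_mul_bpfactor.
move=> A A_comp; have [Ad_comp AK] := completion_bp_divr a_adm A_comp.
by rewrite -AK -(B_uniq _ Ad_comp).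
Qed.

End Completion.
End CoefficientField.
End ParaunitaryCompletion.

Theorem theorem3 (R : realType) (F : {pred R[i]})
  (F_subfield : GRing.divring_closed F)
  (F_conj : {in F, forall x : R[i], x^* \in F})
  (m N : nat) (hm : (2 <= m)%N) (hN : (1 <= N)%N)
  (v : 'rV[R[i]]_m) (V : 'M[R[i]]_m) (a : 'rV[{poly R[i]}]_m) :
  (forall j, v ord0 j \in F) ->
  \sum_j `|v ord0 j| ^+ 2 = 1 ->
  (forall i j, V i j \in F) ->
  V *m (map_mx (fun x : R[i] => x^*) V)^T = 1%:M ->
  row (ord_first (ltnW hm)) V = v ->
  (forall j k, (a ord0 j)`_k \in F) ->
  (forall j, (size (a ord0 j) <= N.+1)%N) ->
  0 < \sum_j `|(a ord0 j)`_N| ->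
  (forall z : R[i], z != 0 -> \sum_j (a ord0 j).[z] * tilde_eval (a ord0 j) z = 1) ->
  (forall j, (a ord0 j).[1] = v ord0 j) ->
  exists! A : 'M[{poly R[i]}]_m,
    [/\ WM N F A, evalmx A 1 = V & row (ord_first (ltnW hm)) A = a].
Proof.
case: m hm v V a => [|m] // hm v V a _ _ VF VU rowV aF sz_a lead_a pu_a a1.
apply: (completion_unique F_subfield F_conj _ _ (i0 := ord_first (ltnW hm))).
- exact/mxOverP.
- by apply/unitarymxP; rewrite -map_trmx.
split.
- by apply/mxpolyOverP => i j k; rewrite (ord1 i).
- by move=> i j; rewrite (ord1 i).
- apply: contraTneq lead_a => /matrixP aN0; rewrite big1 ?lt0r ?eqxx // => j _.
  by have := aN0 0 j; rewrite !mxE => ->; rewrite normr0.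
- move=> z z_neq0; apply/matrixP=> i j; rewrite (ord1 i) (ord1 j) !mxE /=.
  by rewrite -(pu_a z z_neq0); apply: eq_bigr => k _; rewrite !mxE.
- by apply/matrixP=> i j; rewrite (ord1 i) !mxE a1 -rowV mxE.
Qed.
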